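(* For every tree $T\subseteq\mathbb{N}^{<\mathbb{N}}$, $[\mathcal{JT}^\omega(T)]=\{\mathcal{J}^\omega(Z):Z\in[T]\}$, where $\mathcal{JT}^\omega(T)=\{J^\omega(\sigma):\sigma\in T\}$.
   Context: A tree is a subset of $\mathbb{N}^{<\mathbb{N}}$ closed under initial segments; $[T]$ is its set of infinite paths. Strings are coded by natural numbers via a fixed computable coding with $\sigma\subsetneq\tau$ implying code$(\sigma)<$ code$(\tau)$. For $\sigma$ finite or infinite, $\{e\}^\sigma_t(n)\downarrow$ means the $e$-th machine on input $n$ with oracle $\sigma$ halts in fewer than $\min(|\sigma|,t)$ steps. For $Z\in\mathbb{N}^\mathbb{N}$: $t_{-1}=1$, $t_n=\max\{t_{n-1}+1,\mu t(\{n\}^Z_t(n)\downarrow)\}$ ($t_n=t_{n-1}+1$ if no such $t$), $\mathcal{J}(Z)(n)=Z\restriction t_n$, and $\mathcal{J}^\omega(Z)(n)=\mathcal{J}^{n+1}(Z)(0)$. For finite $\sigma$: $t_{-1}=1$, $t_n=\max\{t_{n-1}+1,\mu t(\{n\}^{\sigma\restriction t}(n)\downarrow)\}$ ($t_n=t_{n-1}+1$ if no such $t$), $J(\sigma)=\langle\sigma\restriction t_0,\dots,\sigma\restriction t_{k-1}\rangle$ with $k$ least such that $t_k>|\sigma|$; $J^m$ is the $m$-fold iterate; $J^\omega(\sigma)=\langle J(\sigma)(0),J^2(\sigma)(0),\dots,J^{n-1}(\sigma)(0)\rangle$ where $n$ is least with $J^n(\sigma)=\emptyset$. *)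

From mathcomp Require Import all_boot.
From Stdlib Require Import ClassicalEpsilon.

Set Implicit Arguments.
Unset Strict Implicit.
Unset Printing Implicit Defensive.

(* Finite strings of naturals are [seq nat]; sigma|t is [take t sigma];
   for Z : nat -> nat, Z|t is [mkseq Z t]. *)

Definition code (s : seq nat) : nat := CodeSeq.code s.

Lemma code_prefix_lt (s u : seq nat) : u != [::] -> code s < code (s ++ u).
Proof.
rewrite /code; elim: s => [|a s IH] /=.
  case: u => [|b u] //= _; rewrite muln_gt0 expn_gt0 //.
move=> /IH; rewrite ltn_pmul2l ?expn_gt0 // ltnS -!muln2 ltn_mul2r //.
Qed.

Definition is_tree (T : seq nat -> Prop) : Prop :=
  forall (s : seq nat) (n : nat), T s -> T (take n s).

Definition body (S : seq nat -> Prop) (f : nat -> nat) : Prop :=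
  forall n : nat, S (mkseq f n).

(* A machine model: [mrun e n o s] = "the e-th machine on input n with
   (partial) oracle o halts in fewer than s steps".  The only structural
   facts assumed are the standard ones: a computation of fewer than s
   steps can only query the oracle below s (use principle), and halting
   in fewer than s steps implies halting in fewer than s+1 steps. *)
Record machine_model := MachineModel {
  mrun : nat -> nat -> (nat -> option nat) -> nat -> bool;
  mrun_use : forall e n (o o' : nat -> option nat) s,
      (forall i, i < s -> o i = o' i) -> mrun e n o s = mrun e n o' s;
  mrun_mono : forall e n o s, mrun e n o s -> mrun e n o s.+1
}.

Definition fin_oracle (s : seq nat) : nat -> option nat :=
  fun i => if i < size s then Some (nth 0 s i) else None.

Definition inf_oracle (Z : nat -> nat) : nat -> option nat :=
  fun i => Some (Z i).

Definition halts_fin (M : machine_model) (e : nat) (sigma : seq nat) (t n : nat)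
  : bool := mrun M e n (fin_oracle sigma) (minn (size sigma) t).

(* {e}^sigma(n)| (no step bound): halts in fewer than |sigma| steps. *)
Definition halts_fin_nb (M : machine_model) (e : nat) (sigma : seq nat) (n : nat)
  : bool := mrun M e n (fin_oracle sigma) (size sigma).

(* {e}^Z_t(n)| for infinite Z : halts in fewer than min(oo, t) = t steps. *)
Definition halts_inf (M : machine_model) (e : nat) (Z : nat -> nat) (t n : nat)
  : Prop := mrun M e n (inf_oracle Z) t.

Definition mu_inf (P : pred nat) : option nat :=
  match excluded_middle_informative (exists t, P t) with
  | left h => Some (ex_minn h)
  | right _ => None
  end.

(* tZ M Z 0 = t_{-1} = 1 ; tZ M Z n.+1 = t_n. *)
Fixpoint tZ (M : machine_model) (Z : nat -> nat) (k : nat) : nat :=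
  match k with
  | 0 => 1
  | n.+1 =>
      let prev := tZ M Z n in
      match mu_inf (fun t => mrun M n n (inf_oracle Z) t) with
      | Some m => maxn prev.+1 m
      | None => prev.+1
      end
  end.

Definition jumpZ (M : machine_model) (Z : nat -> nat) : nat -> nat :=
  fun n => code (mkseq Z (tZ M Z n.+1)).

Definition jumpZ_omega (M : machine_model) (Z : nat -> nat) : nat -> nat :=
  fun n => iter n.+1 (jumpZ M) Z 0.

(* mu t. {n}^{sigma|t}(n)| ; for t >= |sigma| the condition is that for
   t = |sigma|, so it suffices to search t in 0..|sigma|. *)
Definition mu_fin (M : machine_model) (sigma : seq nat) (n : nat) : option nat :=
  let P := fun t => halts_fin_nb M n (take t sigma) n in
  let ts := iota 0 (size sigma).+1 in
  if has P ts then Some (nth 0 ts (find P ts)) else None.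

(* tS M sigma 0 = t_{-1} = 1 ; tS M sigma n.+1 = t_n. *)
Fixpoint tS (M : machine_model) (sigma : seq nat) (k : nat) : nat :=
  match k with
  | 0 => 1
  | n.+1 =>
      let prev := tS M sigma n in
      match mu_fin M sigma n with
      | Some m => maxn prev.+1 m
      | None => prev.+1
      end
  end.

(* k = least index with t_k > |sigma| (exists below |sigma|+1 since t_n >= n+2). *)
Definition jlen (M : machine_model) (sigma : seq nat) : nat :=
  find (fun i => size sigma < tS M sigma i.+1) (iota 0 (size sigma).+1).

Definition jumpS (M : machine_model) (sigma : seq nat) : seq nat :=
  [seq code (take (tS M sigma i.+1) sigma) | i <- iota 0 (jlen M sigma)].

(* n = least with J^n(sigma) = empty (exists below |sigma|+1). *)
Definition jomega_len (M : machine_model) (sigma : seq nat) : nat :=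
  find (fun i => iter i (jumpS M) sigma == [::]) (iota 0 (size sigma).+1).

Definition jumpS_omega (M : machine_model) (sigma : seq nat) : seq nat :=
  [seq nth 0 (iter i (jumpS M) sigma) 0 | i <- iota 1 (jomega_len M sigma).-1].

Definition JT_omega (M : machine_model) (T : seq nat -> Prop) : seq nat -> Prop :=
  fun tau => exists sigma, T sigma /\ jumpS_omega M sigma = tau.

From mathcomp Require Import all_boot.
From Stdlib Require Import ClassicalEpsilon FunctionalExtensionality.

Set Implicit Arguments.
Unset Strict Implicit.
Unset Printing Implicit Defensive.

(* The finite search for the least halting time of the diagonal computation
   only consults the string below that time, so on a string r the values
   t_0 < t_1 < ... coincide with those of any Z extending r as long as they
   stay below |r|.  Hence J of a long enough prefix of Z is a prefix of J(Z), and
   iterating, J^omega(Z|l) = J^omega(Z)|n for a suitable l.  Conversely, if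
   J^omega(sigma_n) = f|n for all n, the strings J^j(sigma_n) stabilise on longer
   and longer prefixes as n grows, because entry i of J^(j+1) codes a prefix of
   J^j of length > i+1.  Their limits Z_j satisfy Z_(j+1) = J(Z_j), and Z_0 is a
   path of T with J^omega(Z_0) = f. *)

Lemma find_iota0 (P : pred nat) N k :
  k < N -> P k -> (forall i, i < k -> ~~ P i) -> find P (iota 0 N) = k.
Proof.
move=> kN Pk notP; have hasPk : has P (iota 0 N).
  by apply/hasP; exists k; rewrite ?mem_iota.
apply/eqP; rewrite eqn_leq; apply/andP; split.
  rewrite -ltnS; apply: find_ltn; rewrite take_iota; apply/hasP.
  by exists k; rewrite // mem_iota leq_min ltnSn.
rewrite leqNgt; apply/negP => ltk; have := nth_find 0 hasPk.
by rewrite nth_iota ?(ltn_trans ltk) // add0n (negbTE (notP _ ltk)).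
Qed.

Lemma take_mkseq (Y : nat -> nat) t L : t <= L -> take t (mkseq Y L) = mkseq Y t.
Proof. by move=> tL; rewrite /mkseq -map_take take_iota (minn_idPl tL). Qed.

Section Jump.
Variable M : machine_model.

Lemma tS_ltS s n : tS M s n < tS M s n.+1.
Proof. by rewrite /=; case: (mu_fin M s n) => [a|] //; apply: leq_maxl. Qed.

Lemma tZ_ltS Z n : tZ M Z n < tZ M Z n.+1.
Proof. by rewrite /=; case: (mu_inf _) => [a|] //; apply: leq_maxl. Qed.

Lemma tS_gt s n : n < tS M s n.
Proof. by elim: n => [|n IH] //; apply: leq_ltn_trans IH (tS_ltS s n). Qed.

Lemma tZ_gt Z n : n < tZ M Z n.
Proof. by elim: n => [|n IH] //; apply: leq_ltn_trans IH (tZ_ltS Z n). Qed.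

Lemma tS_monotone s : {homo tS M s : m n / m <= n}.
Proof.
by apply: homo_leq => [//|y x z|n]; [apply: leq_trans | apply: ltnW (tS_ltS s n)].
Qed.

Lemma tZ_monotone Z : {homo tZ M Z : m n / m <= n}.
Proof.
by apply: homo_leq => [//|y x z|n]; [apply: leq_trans | apply: ltnW (tZ_ltS Z n)].
Qed.

Lemma halts_fin_nb_mkseq (Y : nat -> nat) e t :
  halts_fin_nb M e (mkseq Y t) e = mrun M e e (inf_oracle Y) t.
Proof.
rewrite /halts_fin_nb size_mkseq; apply: mrun_use => i it.
by rewrite /fin_oracle /inf_oracle size_mkseq it nth_mkseq.
Qed.

Lemma mu_fin_spec s e :
  match mu_fin M s e with
  | Some a => [/\ a <= size s, halts_fin_nb M e (take a s) e
                & forall t, t < a -> ~~ halts_fin_nb M e (take t s) e]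
  | None => forall t, t <= size s -> ~~ halts_fin_nb M e (take t s) e
  end.
Proof.
rewrite /mu_fin; set P := fun t => _; set ts := iota 0 _.
have nth_ts i : i < (size s).+1 -> nth 0 ts i = i by move=> ?; rewrite nth_iota.
have [hasPts|hasN] := boolP (has P ts).
  have lt_find : find P ts < (size s).+1 by move: hasPts; rewrite has_find size_iota.
  rewrite nth_ts //; split; [by [] | by have := nth_find 0 hasPts; rewrite nth_ts |].
  move=> t lt_t; have := before_find 0 lt_t.
  by rewrite nth_ts ?(ltn_trans lt_t) // => /negbT.
move=> t le_t; apply: contra hasN => Pt.
by apply/hasP; exists t; rewrite ?mem_iota.
Qed.

Lemma mu_inf_spec (P : pred nat) :
  match mu_inf P with
  | Some a => P a /\ forall t, t < a -> ~~ P t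
  | None => forall t, ~~ P t
  end.
Proof.
rewrite /mu_inf; case: excluded_middle_informative => [h|h].
  case: (ex_minnP h) => a Pa amin; split => // t lt_t.
  by apply: contraL lt_t => /amin; rewrite -leqNgt.
by move=> t; apply/negP => Pt; apply: h; exists t.
Qed.

Lemma mu_fin_le_size s e a : mu_fin M s e = Some a -> a <= size s.
Proof. by have := mu_fin_spec s e => + E; rewrite E => -[]. Qed.

Lemma mu_fin_le_tS s e a : mu_fin M s e = Some a -> a <= tS M s e.+1.
Proof. by move=> E; rewrite /= E leq_maxr. Qed.

Lemma mu_inf_le_tZ Z e a :
  mu_inf (fun t => mrun M e e (inf_oracle Z) t) = Some a -> a <= tZ M Z e.+1.
Proof. by move=> E; rewrite /= E leq_maxr. Qed.

Lemma mu_fin_mu_inf r Y L e : take L r = mkseq Y L ->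
  (forall a, mu_fin M r e = Some a -> a <= L) ->
  (forall a, mu_inf (fun t => mrun M e e (inf_oracle Y) t) = Some a -> a <= L) ->
  mu_fin M r e = mu_inf (fun t => mrun M e e (inf_oracle Y) t).
Proof.
move=> rY finL infL.
have le_L_size : L <= size r by rewrite -(size_mkseq Y L) -rY size_take geq_minr.
have haltsE t : t <= L -> halts_fin_nb M e (take t r) e = mrun M e e (inf_oracle Y) t.
  by move=> tL; rewrite -(take_takel _ tL) rY take_mkseq // halts_fin_nb_mkseq.
have := mu_fin_spec r e; have := mu_inf_spec (fun t => mrun M e e (inf_oracle Y) t).
case Ef: (mu_fin M r e) => [a|]; case Ei: (mu_inf _) => [b|].
- move=> [Pb bmin] [_ Pa amin]; have aL := finL a Ef; have bL := infL b Ei.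
  rewrite haltsE // in Pa; congr Some; apply/eqP; rewrite eqn_leq.
  apply/andP; split; rewrite leqNgt; apply/negP.
    by move=> /amin; rewrite haltsE ?Pb.
  by move=> /bmin; rewrite Pa.
- by move=> noP [_ Pa _]; rewrite haltsE ?finL // (negbTE (noP a)) in Pa.
- move=> [Pb _] noP; have bL := infL b Ei.
  by have := noP b (leq_trans bL le_L_size); rewrite haltsE ?Pb.
- by [].
Qed.

Lemma tS_eq_tZ r Y L k : take L r = mkseq Y L -> tZ M Y k <= L ->
  (forall m a, m < k -> mu_fin M r m = Some a -> a <= L) -> tS M r k = tZ M Y k.
Proof.
move=> rY; elim: k => [//|k IH] tZL finL.
have tZkL : tZ M Y k <= L by apply: leq_trans (ltnW (tZ_ltS Y k)) tZL.
rewrite /= -/(tS M r k) -/(tZ M Y k) IH // => [|m a mk]; last by apply: finL; apply: ltnW.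
rewrite (@mu_fin_mu_inf r Y L k) // => [a|a /mu_inf_le_tZ aZ]; first exact: finL.
exact: leq_trans aZ tZL.
Qed.

Lemma size_jumpS r : size (jumpS M r) = jlen M r.
Proof. by rewrite /jumpS size_map size_iota. Qed.

Lemma jlen_le_size r : jlen M r <= (size r).+1.
Proof. by rewrite /jlen -[X in _ <= X](size_iota 0); apply: find_size. Qed.

Lemma tS_le_size r k : k < jlen M r -> tS M r k.+1 <= size r.
Proof.
move=> kl; have := before_find 0 kl.
by rewrite nth_iota ?(leq_trans kl (jlen_le_size r)) // add0n => /negbT; rewrite -leqNgt.
Qed.

Lemma nth_jumpS r k : k < jlen M r -> nth 0 (jumpS M r) k = code (take (tS M r k.+1) r).
Proof. by move=> kl; rewrite /jumpS (nth_map 0) ?size_iota // nth_iota. Qed.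

Lemma nth_jumpS_eq r r' k : k < jlen M r -> k < jlen M r' ->
  nth 0 (jumpS M r) k = nth 0 (jumpS M r') k ->
  tS M r k.+1 = tS M r' k.+1 /\ take (tS M r k.+1) r = take (tS M r k.+1) r'.
Proof.
move=> kr kr'; rewrite !nth_jumpS // => /(can_inj CodeSeq.codeK) rr'.
have tSE : tS M r k.+1 = tS M r' k.+1.
  by have := congr1 size rr'; rewrite !size_takel ?tS_le_size.
by rewrite rr' tSE.
Qed.

Lemma jumpS_short r : size r <= 1 -> jumpS M r = [::].
Proof.
move=> r1; rewrite /jumpS /jlen (@find_iota0 _ _ 0) //.
exact: leq_ltn_trans r1 (tS_gt r 1).
Qed.

Lemma jumpS_mkseq_tZ Y k : jumpS M (mkseq Y (tZ M Y k)) = mkseq (jumpZ M Y) k.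
Proof.
set r := mkseq Y _.
have tSE i : i <= k -> tS M r i = tZ M Y i.
  move=> ik; apply: (tS_eq_tZ (L := tZ M Y k)); rewrite ?take_mkseq ?tZ_monotone //.
  by move=> m a _ /mu_fin_le_size; rewrite size_mkseq.
have jlenE : jlen M r = k.
  apply: find_iota0; rewrite size_mkseq ?ltnS ?(ltnW (tZ_gt Y k)) //.
    by rewrite -(tSE k) // tS_ltS.
  by move=> i ik; rewrite -leqNgt tSE // tZ_monotone.
rewrite /jumpS jlenE /mkseq; apply/eq_in_map => i; rewrite mem_iota add0n => /andP[_ ik].
by rewrite tSE // take_mkseq // tZ_monotone.
Qed.

Lemma size_jumpS_omega s : size (jumpS_omega M s) = (jomega_len M s).-1.
Proof. by rewrite /jumpS_omega size_map size_iota. Qed.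

Lemma nth_jumpS_omega s i : i < (jomega_len M s).-1 ->
  nth 0 (jumpS_omega M s) i = nth 0 (iter i.+1 (jumpS M) s) 0.
Proof.
by move=> il; rewrite /jumpS_omega (nth_map 0) ?size_iota // nth_iota // add1n.
Qed.

Lemma iter_jumpS_neq_nil s i : i < jomega_len M s -> iter i (jumpS M) s != [::].
Proof.
move=> il; have := before_find 0 il; rewrite nth_iota ?add0n => [->//|].
by apply: leq_trans il _; rewrite -[X in _ <= X](size_iota 0) find_size.
Qed.

(* A prefix length of Z such that J^d(Z|plen Z d) = J^d(Z)|1. *)
Fixpoint plen (Z : nat -> nat) (d : nat) : nat :=
  if d is d'.+1 then tZ M Z (plen (jumpZ M Z) d') else 1.

Lemma plen_gt Z d : d < plen Z d.
Proof. by elim: d Z => [//|d IH] Z; apply: leq_ltn_trans (IH _) (tZ_gt _ _). Qed.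

Lemma iter_jumpS_mkseq_plen Z d i : i <= d ->
  iter i (jumpS M) (mkseq Z (plen Z d)) =
  mkseq (iter i (jumpZ M) Z) (plen (iter i (jumpZ M) Z) (d - i)).
Proof.
elim: i Z d => [|i IH] Z [|d] // id; rewrite ?subn0 //.
by rewrite iterSr /= jumpS_mkseq_tZ IH // -iterSr subSS.
Qed.

Lemma jumpS_omega_mkseq_plen Z n :
  jumpS_omega M (mkseq Z (plen Z n)) = mkseq (jumpZ_omega M Z) n.
Proof.
have lenE : jomega_len M (mkseq Z (plen Z n)) = n.+1.
  apply: find_iota0.
  - by rewrite size_mkseq ltnS plen_gt.
  - by rewrite iterS iter_jumpS_mkseq_plen // subnn jumpS_short // size_mkseq.
  - move=> i; rewrite ltnS => le_i.
    rewrite iter_jumpS_mkseq_plen // -size_eq0 size_mkseq -lt0n.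
    exact: leq_ltn_trans (leq0n _) (plen_gt _ _).
apply: (@eq_from_nth _ 0) => [|i lt_i]; first by rewrite size_jumpS_omega lenE size_mkseq.
rewrite size_jumpS_omega lenE /= in lt_i.
rewrite nth_jumpS_omega ?lenE // iter_jumpS_mkseq_plen // !nth_mkseq //.
exact: leq_ltn_trans (leq0n _) (plen_gt _ _).
Qed.

Section Convergence.
Variable f : nat -> nat.
Variable sigma : nat -> seq nat.
Hypothesis jumpS_omega_sigma : forall n, jumpS_omega M (sigma n) = mkseq f n.

Definition level j n := iter j (jumpS M) (sigma n).

Lemma levelS j n : level j.+1 n = jumpS M (level j n).
Proof. by []. Qed.

Lemma take_level_head i n : i < n -> take 1 (level i.+1 n) = [:: f i].
Proof.
move=> lt_i; have lenE : jomega_len M (sigma n) = n.+1.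
  have := size_jumpS_omega (sigma n); rewrite jumpS_omega_sigma size_mkseq.
  by case: (jomega_len M (sigma n)) => [|l] /= nl; [rewrite nl in lt_i | rewrite nl].
have /iter_jumpS_neq_nil : i.+1 < jomega_len M (sigma n) by rewrite lenE.
have /nth_jumpS_omega : i < (jomega_len M (sigma n)).-1 by rewrite lenE.
rewrite jumpS_omega_sigma nth_mkseq // /level.
by case: (iter i.+1 _ _) => [|a s] //= <- _; rewrite take0.
Qed.

Definition prefix_stable j L N := forall n n', N <= n -> N <= n' ->
  L <= size (level j n) /\ take L (level j n) = take L (level j n').

Lemma prefix_stable_le j L L' N : L' <= L -> prefix_stable j L N -> prefix_stable j L' N.
Proof.
move=> le_L st n n' hn hn'; have [sz e] := st n n' hn hn'; split.
  exact: leq_trans le_L sz.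
by rewrite -(take_takel _ le_L) e take_takel.
Qed.

(* Entry L of level j.+1 codes the prefix of level j of length t_(L+1) > L+1. *)
Lemma prefix_stable_jump j L N : prefix_stable j.+1 L.+1 N -> prefix_stable j L.+2 N.
Proof.
move=> st n n' hn hn'; have [sz e] := st n n' hn hn'; have [sz' _] := st n' n hn' hn.
move: sz sz'; rewrite !levelS !size_jumpS => sz sz'.
have eL : nth 0 (level j.+1 n) L = nth 0 (level j.+1 n') L.
  by rewrite -(nth_take 0 (ltnSn L)) e nth_take.
have [_ take_eq] := nth_jumpS_eq sz sz' eL.
have gt_L : L.+2 <= tS M (level j n) L.+1 by apply: tS_gt.
split; first exact: leq_trans gt_L (tS_le_size sz).
by rewrite -(take_takel _ gt_L) take_eq take_takel.
Qed.

Lemma prefix_stable_head j : prefix_stable j.+1 1 j.+1.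
Proof.
move=> n n' hn hn'; rewrite !take_level_head //; split=> //.
by rewrite lt0n size_eq0; apply: contra_eq_neq (take_level_head hn) => ->.
Qed.

Lemma prefix_stable_level j L : prefix_stable j L (j + L).
Proof.
have succ k : forall j', prefix_stable j' k.+2 (j' + k.+1).
  elim: k => [|k IH] j'.
    by rewrite addn1; apply: prefix_stable_jump; apply: prefix_stable_head.
  by rewrite -addSnnS; apply: prefix_stable_jump.
case: L => [|L]; first by move=> n n' _ _; rewrite !take0.
exact: prefix_stable_le (leqnSn _) (succ L j).
Qed.

Definition limit j i := nth 0 (level j (j + i.+1)) i.

Lemma take_level_limit j L n : j + L <= n -> take L (level j n) = mkseq (limit j) L.
Proof.
move=> hn; have [sz _] := prefix_stable_level hn hn.
apply: (@eq_from_nth _ 0); rewrite ?size_takel ?size_mkseq // => i lt_i.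
have hi : j + i.+1 <= n by apply: leq_trans hn; rewrite leq_add2l.
have [_ e] := prefix_stable_level hi (leqnn _).
by rewrite nth_take // nth_mkseq // /limit -(nth_take 0 (ltnSn i)) e nth_take.
Qed.

Lemma tS_level_stable j m n n' : j + m.+1 <= n -> j + m.+1 <= n' ->
  tS M (level j n) m = tS M (level j n') m.
Proof.
case: m => [//|m] hn hn'; rewrite -addSnnS in hn hn'.
have [sz e] := prefix_stable_level hn hn'; have [sz' _] := prefix_stable_level hn' hn.
move: sz sz'; rewrite !levelS !size_jumpS => sz sz'.
have em : nth 0 (level j.+1 n) m = nth 0 (level j.+1 n') m.
  by rewrite -(nth_take 0 (ltnSn m)) e nth_take.
by have [] := nth_jumpS_eq sz sz' em.
Qed.

Lemma tS_level_limit j m n : j + m.+1 <= n -> tS M (level j n) m = tZ M (limit j) m.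
Proof.
move=> hn; set S := tS M (level j (j + m.+1)) m; set L := maxn S (tZ M (limit j) m).
have hn' : j + m.+1 <= j + (m.+1 + L) by rewrite leq_add2l leq_addr.
rewrite (tS_level_stable hn hn'); apply: (tS_eq_tZ (L := L)).
- by apply: take_level_limit; rewrite leq_add2l leq_addl.
- exact: leq_maxr.
move=> m' a lt_m' /mu_fin_le_tS aS; apply: leq_trans aS _.
rewrite (leq_trans (tS_monotone _ lt_m')) // (tS_level_stable hn' (leqnn _)).
exact: leq_maxl.
Qed.

Lemma limit_jump j : limit j.+1 =1 jumpZ M (limit j).
Proof.
move=> m; set t := tZ M (limit j) m.+1; set n := j + (m.+2 + t).
have le_n k : k <= m.+2 + t -> j + k <= n by rewrite leq_add2l.
have e : take m.+1 (level j.+1 n) = mkseq (limit j.+1) m.+1.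
  by apply: take_level_limit; rewrite addSnnS le_n ?leq_addr.
have sz : m < jlen M (level j n).
  by rewrite -size_jumpS -levelS -(size_mkseq (limit j.+1) m.+1) -e size_take geq_minr.
have -> : limit j.+1 m = nth 0 (level j.+1 n) m.
  by rewrite -(nth_take 0 (ltnSn m)) e nth_mkseq.
by rewrite levelS nth_jumpS // tS_level_limit ?take_level_limit ?le_n ?leq_addr ?leq_addl.
Qed.

Lemma iter_jumpZ_limit j : iter j (jumpZ M) (limit 0) = limit j.
Proof.
elim: j => [//|j IH]; rewrite iterS IH.
by apply: functional_extensionality => i; rewrite limit_jump.
Qed.

Lemma jumpZ_omega_limit : jumpZ_omega M (limit 0) = f.
Proof.
apply: functional_extensionality => i.
rewrite /jumpZ_omega iter_jumpZ_limit /limit addn1.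
have := congr1 (nth 0 ^~ 0) (take_level_head (ltnW (ltnSn i.+1))).
by rewrite /= nth_take.
Qed.

Lemma take_sigma_limit n : take n (sigma n) = mkseq (limit 0) n.
Proof. exact: (@take_level_limit 0 n n (leqnn n)). Qed.

End Convergence.
End Jump.

Theorem lemma5p14 (M : machine_model) (T : seq nat -> Prop) :
  is_tree T ->
  forall f : nat -> nat,
    body (JT_omega M T) f <-> exists Z : nat -> nat, body T Z /\ jumpZ_omega M Z = f.
Proof.
move=> treeT f; split; last first.
  move=> [Z [pathZ <-]] n; exists (mkseq Z (plen M Z n)).
  by split; [apply: pathZ | apply: jumpS_omega_mkseq_plen].
move=> /choice[sigma sigmaE].
have jumpS_omega_sigma n : jumpS_omega M (sigma n) = mkseq f n by case: (sigmaE n).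
exists (limit M sigma 0); split; last exact: jumpZ_omega_limit.
move=> n; rewrite -(take_sigma_limit jumpS_omega_sigma); apply: treeT.
by case: (sigmaE n).
Qed.
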